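(* Let $m,k\in\mathbb{N}$. Then \[ {}_3F_2\left[\begin{array}{r} -2m-1,\ 1+k,\ 1+k;\\ -2m-1-k,\ -2m-1-k;\end{array}1\right]_{2m+1}=0. \]
   Context: $\mathbb{N}=\{1,2,3,\dots\}$. For $a\in\mathbb{C}$ and $n\in\mathbb{N}_0$, $(a)_0=1$ and $(a)_n=a(a+1)\cdots(a+n-1)$. For $N\in\mathbb{N}_0$, ${}_3F_2\left[\begin{array}{r} a_1,a_2,a_3;\\ b_1,b_2;\end{array}z\right]_N=\sum_{n=0}^{N}\frac{(a_1)_n(a_2)_n(a_3)_n}{(b_1)_n(b_2)_n}\frac{z^n}{n!}$ (the sum of the first $N+1$ terms), defined whenever $(b_1)_n(b_2)_n\neq0$ for $0\le n\le N$. *)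

From mathcomp Require Import all_boot all_algebra.
Set Implicit Arguments. Unset Strict Implicit. Unset Printing Implicit Defensive.
Import GRing.Theory Num.Theory.
Local Open Scope ring_scope.

Definition poch {R : pzRingType} (a : R) (n : nat) : R :=
  \prod_(i < n) (a + i%:R).

Definition F32_trunc {R : fieldType} (a1 a2 a3 b1 b2 z : R) (N : nat) : R :=
  \sum_(n < N.+1)
     (poch a1 n * poch a2 n * poch a3 n) / (poch b1 n * poch b2 n)
       * (z ^+ n / (n`!)%:R).

From mathcomp Require Import all_boot all_algebra.
From mathcomp Require Import ring zify.
Import GRing.Theory Num.Theory.
Local Open Scope ring_scope.

(* With N = 2m+1, the n-th term of the series is
   (-1)^n C(N, n) (w_n / (k! (N+k)!))^2  where  w_n = (k+n)! (N+k-n)!,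
   and w_(N-n) = w_n, C(N, N-n) = C(N, n).  Since N is odd, the terms of
   index n and N-n cancel, so the sum S satisfies S = -S, i.e. S = 0 in
   characteristic zero. *)

Lemma pochS {R : pzRingType} (a : R) n : poch a n.+1 = poch a n * (a + n%:R).
Proof. by rewrite /poch big_ord_recr. Qed.

Lemma poch_opp_nat {R : comPzRingType} (M n : nat) : (n <= M)%N ->
  poch (- (M%:R : R)) n = (-1) ^+ n * (M ^_ n)%:R.
Proof.
elim: n => [|n IHn] ltnM; first by rewrite /poch big_ord0 ffactn0 expr0 mulr1.
rewrite pochS IHn ?(ltnW ltnM) // ffactnSr natrM natrB ?(ltnW ltnM) // exprS.
ring.
Qed.

Lemma poch_succ_nat {R : comPzRingType} (k n : nat) :
  poch (1 + (k%:R : R)) n * (k`!)%:R = ((k + n)`!)%:R.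
Proof.
elim: n => [|n IHn]; first by rewrite /poch big_ord0 mul1r addn0.
rewrite pochS mulrAC IHn addnS factS natrM mulrC -addn1 !natrD; ring.
Qed.

Lemma signr_sub_odd {R : pzRingType} (N i : nat) : odd N -> (i <= N)%N ->
  (-1) ^+ (N - i) = - (-1) ^+ i :> R.
Proof.
move=> oddN leiN; rewrite -signr_odd oddB // oddN -[in RHS]signr_odd.
by case: (odd i); rewrite ?opprK.
Qed.

Lemma sum_eq0_antisym {R : numDomainType} (N : nat) (F : nat -> R) :
  (forall i, (i <= N)%N -> F (N - i)%N = - F i) -> \sum_(i < N.+1) F i = 0.
Proof.
move=> Fanti; set S := \sum_(i < N.+1) F i.
have SN : S = - S.
  rewrite {1}/S (reindex_inj rev_ord_inj) /= -sumrN.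
  by apply: eq_bigr => i _; rewrite subSS Fanti // -ltnS.
have : 2%:R * S = 0 by rewrite mulr_natl mulr2n {2}SN subrr.
by move/eqP; rewrite mulf_eq0 pnatr_eq0 => /eqP.
Qed.

Definition F32_term {R : fieldType} (a1 a2 a3 b1 b2 z : R) (n : nat) : R :=
  (poch a1 n * poch a2 n * poch a3 n) / (poch b1 n * poch b2 n)
    * (z ^+ n / (n`!)%:R).

Lemma F32_truncE {R : fieldType} (a1 a2 a3 b1 b2 z : R) (N : nat) :
  F32_trunc a1 a2 a3 b1 b2 z N = \sum_(n < N.+1) F32_term a1 a2 a3 b1 b2 z n.
Proof. by []. Qed.

Definition fact_weight (N k n : nat) : nat := ((k + n)`! * (N + k - n)`!)%N.

Lemma fact_weight_sym (N k n : nat) : (n <= N)%N ->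
  fact_weight N k (N - n)%N = fact_weight N k n.
Proof.
by move=> lenN; rewrite /fact_weight mulnC; congr (_`! * _`!); lia.
Qed.

Lemma F32_term_closed (R : numFieldType) (N k n : nat) : (n <= N)%N ->
  F32_term (R:=R) (- N%:R) (1 + k%:R) (1 + k%:R) (- (N + k)%:R) (- (N + k)%:R) 1 n
    = (-1) ^+ n * 'C(N, n)%:R
      * ((fact_weight N k n)%:R / (k`! * (N + k)`!)%:R) ^+ 2.
Proof.
move=> lenN; have lenNk : (n <= N + k)%N by lia.
have fact_neq0 j : (j`!)%:R != 0 :> R by rewrite pnatr_eq0 -lt0n fact_gt0.
have sign_neq0 : (-1) ^+ n != 0 :> R by rewrite signr_eq0.
have numer : poch (- N%:R) n = (-1) ^+ n * 'C(N, n)%:R * (n`!)%:R :> R.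
  by rewrite poch_opp_nat // -bin_ffact natrM mulrA.
have upper : poch (1 + k%:R) n = ((k + n)`!)%:R / (k`!)%:R :> R.
  by rewrite -poch_succ_nat mulrK // unitfE.
have lower : poch (- (N + k)%:R) n
    = (-1) ^+ n * ((N + k)`!)%:R / ((N + k - n)`!)%:R :> R.
  by rewrite poch_opp_nat // -(ffact_fact lenNk) natrM mulrA mulrK // unitfE.
rewrite /F32_term /fact_weight numer upper lower expr1n !natrM.
have sign_sq : (-1) ^+ n * (-1) ^+ n = 1 :> R by rewrite -expr2 sqrr_sign.
field: sign_sq.
by rewrite !fact_neq0 sign_neq0.
Qed.

Theorem mainTheorem13 (R : numFieldType) (m k : nat) (hm : (0 < m)%N) (hk : (0 < k)%N) :
  F32_trunc (R:=R)
    (- (2 * m + 1)%:R) (1 + k%:R) (1 + k%:R)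
    (- (2 * m + 1 + k)%:R) (- (2 * m + 1 + k)%:R)
    1 (2 * m + 1) = 0.
Proof.
set N := (2 * m + 1)%N.
have oddN : odd N by rewrite /N addn1 /= oddM.
rewrite F32_truncE; apply: sum_eq0_antisym => i leiN.
rewrite !F32_term_closed ?leq_subr // bin_sub // fact_weight_sym //.
by rewrite signr_sub_odd // !mulNr.
Qed.
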